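(* Consider $(\mathbb R^2,d_{\rm e},\mu)$ with $\mu=\lambda_1+\lambda_2$, where $\lambda_1$ is one-dimensional Lebesgue measure on the segment $A=[0,1]\times\{0\}$ and $\lambda_2$ is two-dimensional Lebesgue measure on $\mathbb R^2$. Then there exists $f\in L^1(\mu)$ with compact support such that $\{x\in\mathbb R^2:\mathcal Mf(x)=\infty\}=A$. In particular the noncentered maximal operator $\mathcal M$ does not possess the dichotomy property for this space.
   Context: $d_{\rm e}$ is the Euclidean metric. $\mathcal Mf(x)=\sup_{B\ni x}\mu(B)^{-1}\int_B|f|d\mu$, the supremum over open Euclidean balls $B$ containing $x$. $\mathcal M$ possesses the dichotomy property if for every $f$ integrable on every ball either $\mu(\{\mathcal Mf=\infty\})=0$ or $\mathcal Mf\equiv\infty$. *)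

From HB Require Import structures.
From mathcomp Require Import all_boot all_order all_algebra.
From mathcomp Require Import all_classical all_reals all_analysis.
Import Order.TTheory GRing.Theory Num.Theory.

Set Implicit Arguments.
Unset Strict Implicit.
Unset Printing Implicit Defensive.

Local Open Scope classical_set_scope.
Local Open Scope ring_scope.

(* The plane R^2, as the product of two copies of the real line carrying
   the Lebesgue (Borel) measurable structure used by [lebesgue_measure]. *)
Notation R2 R := (measurableTypeR R * measurableTypeR R)%type.

Section defs.
Variable R : realType.

Definition eball (c : R2 R) (r : R) : set (R2 R) :=
  [set y | (y.1 - c.1) ^+ 2 + (y.2 - c.2) ^+ 2 < r ^+ 2].

Definition is_eball (B : set (R2 R)) : Prop :=
  exists c r, 0 < r /\ B = eball c r.

Definition segA : set (R2 R) := [set x | 0 <= x.1 <= 1 /\ x.2 = 0].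

Definition emb (t : measurableTypeR R) : R2 R := (t, 0).

Lemma measurable_emb : measurable_fun [set: measurableTypeR R] emb.
Proof.
apply: measurable_fun_pair; first exact: measurable_id.
exact: measurable_cst.
Qed.

Definition lambda1_fun :=
  pushforward (mrestr (@lebesgue_measure R) (measurable_itv `[0%R, 1%R])) emb.

Definition lambda1 : {measure set (R2 R) -> \bar R}.
Proof.
refine (lambda1_fun : {measure set (R2 R) -> \bar R}).
exact: measurable_emb.
Defined.

Definition lambda2 : {measure set (R2 R) -> \bar R} :=
  ((@lebesgue_measure R) \x (@lebesgue_measure R))%E.

Definition mu : {measure set (R2 R) -> \bar R} := measure_add lambda1 lambda2.

Definition maxfun (m : {measure set (R2 R) -> \bar R}) (f : R2 R -> R)
    (x : R2 R) : \bar R :=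
  ereal_sup [set ((\int[m]_(y in B) (`|f y|)%:E) * ((fine (m B))^-1)%:E)%E
            | B in [set B | is_eball B /\ B x]].

Definition dichotomy (m : {measure set (R2 R) -> \bar R}) : Prop :=
  forall f : R2 R -> R, measurable_fun [set: R2 R] f ->
    (forall B, is_eball B -> m.-integrable B (EFin \o f)) ->
    m [set x | maxfun m f x = +oo%E] = 0%E \/ (forall x, maxfun m f x = +oo%E).

End defs.

Arguments segA R : clear implicits.

From HB Require Import structures.
From mathcomp Require Import all_boot all_order all_algebra.
From mathcomp Require Import all_classical all_reals all_analysis.
From mathcomp Require Import ring lra.
From mathcomp Require Import measurable_realfun.
Import Order.TTheory GRing.Theory Num.Theory.
Local Open Scope classical_set_scope.
Local Open Scope ring_scope.

(* The witness is f(y) = y_2^(-1/2) on [0,1] x (0,1] and 0 elsewhere.  It is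
   planar-integrable: on the layer 4^(-k-1) < y_2 <= 4^(-k) it is at most
   2^(k+1) while the layer has mass 3/4 * 4^(-k).  Off A it is bounded near
   each point, so small balls have bounded averages and balls of radius r have
   averages at most |f|_1 / r^2.  At (t,0) in A, the ball of center (t,r) and
   radius r + r^3 contains the point yet meets A in a chord of length O(r^2),
   so its mu-measure is O(r^2), while it contains an (r/2) x r box on which
   f >= (2r)^(-1/2): the averages blow up as r -> 0.  Since mu(A) >= 1 and Mf
   is finite off A, the dichotomy fails. *)

Section counterexample.
Variable R : realType.
Local Notation P := (R2 R).
Local Notation leb := (@lebesgue_measure R).

Lemma ltr_sqr_bounds (a b : R) : 0 < b -> a ^+ 2 < b ^+ 2 -> - b < a < b.
Proof.
move=> b0 ab; rewrite -ltr_norml.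
by rewrite -(ltr_pXn2r (n := 2)) // ?nnegrE ?ltW // real_normK ?num_real.
Qed.

Definition box (a b c d : R) : set P := `]a, b[ `*` `]c, d[.

Definition square (c : P) (r : R) : set P :=
  box (c.1 - r) (c.1 + r) (c.2 - r) (c.2 + r).

Lemma eball_sub_square (c : P) r : 0 < r -> eball c r `<=` square c r.
Proof.
move=> r0 y; rewrite /eball /square /box /= !in_itv /= => ycr.
have [/(ltr_sqr_bounds _ _ r0)/andP[? ?] /(ltr_sqr_bounds _ _ r0)/andP[? ?]] :
    (y.1 - c.1) ^+ 2 < r ^+ 2 /\ (y.2 - c.2) ^+ 2 < r ^+ 2.
  by have := sqr_ge0 (y.1 - c.1); have := sqr_ge0 (y.2 - c.2); split; lra.
by split; apply/andP; split; lra.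
Qed.

Lemma square_sub_eball (c : P) r : 0 < r -> square c (r / 2) `<=` eball c r.
Proof.
rewrite /eball /square /box /= => r0 y /=; rewrite !in_itv /=.
by move=> -[/andP[? ?] /andP[? ?]]; nra.
Qed.

Lemma eball_sub_square_mem (c x : P) r s : 0 < r -> 2 * r <= s -> eball c r x ->
  eball c r `<=` square x s.
Proof.
move=> r0 rs /(eball_sub_square _ _ r0) + y /(eball_sub_square _ _ r0).
by rewrite /square /box /= !in_itv /= => -[/andP[? ?] /andP[? ?]] [/andP[? ?] /andP[? ?]];
  split; apply/andP; split; lra.
Qed.

Lemma measurable_box a b c d : measurable (box a b c d).
Proof. by apply: measurableX; exact: measurable_itv. Qed.

Lemma measurable_eball (c : P) r : measurable (eball c r).
Proof.
have : measurable_fun [set: P] (fun y : P => (y.1 - c.1) ^+ 2 + (y.2 - c.2) ^+ 2).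
  by apply: measurable_funD; apply: measurable_funX; apply: measurable_funB.
move=> /(_ measurableT _ (measurable_itv `]-oo, r ^+ 2[)); rewrite setTI.
by congr measurable; apply/seteqP; split => y /=; rewrite in_itv.
Qed.

Lemma lebesgue_measure_itv_len (a b : R) (b1 b2 : bool) : a < b ->
  leb [set` Interval (BSide b1 a) (BSide b2 b)] = (b - a)%:E.
Proof. by move=> ab; rewrite lebesgue_measure_itv /= lte_fin ab EFinB. Qed.

Lemma lambda1E (A : set P) : lambda1 R A = leb (@emb R @^-1` A `&` `[0, 1]).
Proof. by []. Qed.

Lemma lambda2_setX (A B : set (measurableTypeR R)) : measurable A -> measurable B ->
  lambda2 R (A `*` B) = (leb A * leb B)%E.
Proof. exact: product_measure1E. Qed.

Lemma lambda2_box a b c d : a < b -> c < d ->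
  lambda2 R (box a b c d) = ((b - a) * (d - c))%:E.
Proof.
move=> ab cd; rewrite lambda2_setX; try exact: measurable_itv.
by rewrite !lebesgue_measure_itv_len // EFinM.
Qed.

Lemma muE (A : set P) : mu R A = (lambda1 R A + lambda2 R A)%E.
Proof. exact: measure_addE. Qed.

Lemma lambda2_le_mu (A : set P) : (lambda2 R A <= mu R A)%E.
Proof. by rewrite muE leeDr // measure_ge0. Qed.

Lemma measurable_emb_preimage (A : set P) : measurable A ->
  measurable (@emb R @^-1` A `&` `[0, 1]).
Proof.
move=> mA; apply: measurableI; last exact: measurable_itv.
by have := @measurable_emb R measurableT _ mA; rewrite setTI.
Qed.

Lemma lambda1_le1 [A : set P] : measurable A -> (lambda1 R A <= 1)%E.
Proof.
move=> mA; rewrite lambda1E.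
apply: (@le_trans _ _ (leb `[0, 1])); last by rewrite lebesgue_measure_itv_len ?subr0.
apply: le_measure; rewrite ?inE; last exact: subIsetr.
  exact: measurable_emb_preimage.
exact: measurable_itv.
Qed.

Lemma mu_eball_fin_ge (c : P) r : 0 < r ->
  exists m : R, mu R (eball c r) = m%:E /\ r ^+ 2 <= m.
Proof.
move=> r0.
have mu_lty : (mu R (eball c r) < +oo)%E.
  rewrite muE lte_add_pinfty //.
    by apply: le_lt_trans (lambda1_le1 (measurable_eball c r)) _; rewrite ltry.
  apply: (@le_lt_trans _ _ (lambda2 R (square c r))); last first.
    by rewrite lambda2_box ?ltry //; lra.
  apply: le_measure; rewrite ?inE; [exact: measurable_eball|exact: measurable_box|].
  exact: eball_sub_square.
have mu_ge : ((r ^+ 2)%:E <= mu R (eball c r))%E.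
  apply: le_trans _ (lambda2_le_mu _).
  apply: (@le_trans _ _ (lambda2 R (square c (r / 2)))).
    by rewrite lambda2_box ?lee_fin; lra.
  apply: le_measure; rewrite ?inE; [exact: measurable_box|exact: measurable_eball|].
  exact: square_sub_eball.
have mu_fin : mu R (eball c r) \is a fin_num by rewrite ge0_fin_numE ?measure_ge0.
by exists (fine (mu R (eball c r))); rewrite fineK // -lee_fin fineK.
Qed.

Lemma measurable_EFin_normr (f : P -> R) : measurable_fun setT f ->
  measurable_fun setT (fun y => (`|f y|)%:E).
Proof.
by move=> mf; apply/measurable_EFinP/measurableT_comp => //; exact: normr_measurable.
Qed.

Lemma ereal_sup_unbounded (S : set (\bar R)) :
  (forall M : R, exists2 z, S z & (M%:E < z)%E) -> ereal_sup S = +oo%E.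
Proof.
move=> Sub; have supS M : (M%:E < ereal_sup S)%E.
  by have [z Sz Mz] := Sub M; apply: lt_le_trans Mz (ereal_sup_ubound Sz).
by move: supS; case: (ereal_sup S) => [r /(_ r)|//|/(_ 0)]; rewrite ?ltxx.
Qed.

(* Balls of radius < eps/2 through x lie in [square x eps], where |f| <= C;
   larger balls have measure at least (eps/2)^2. *)
Lemma maxfun_lty_locally_bounded (f : P -> R) (x : P) (eps C : R) : 0 < eps ->
  (mu R).-integrable setT (EFin \o f) ->
  (forall y, square x eps y -> `|f y| <= C) -> (maxfun (mu R) f x < +oo)%E.
Proof.
move=> eps0 /integrableP[mf intf] fC.
have C0 : 0 <= C.
  apply: le_trans (normr_ge0 _) (fC x _).
  by rewrite /square /box /= !in_itv /=; split; apply/andP; split; lra.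
have mfa : measurable_fun setT (fun y => (`|f y|)%:E).
  by apply: measurable_EFin_normr; exact/measurable_EFinP.
pose I : R := fine (\int[mu R]_y (`|f y|)%:E).
have I_ge0 : 0 <= I by rewrite fine_ge0 // integral_ge0.
have intI : (\int[mu R]_y (`|f y|)%:E = I%:E)%E.
  by rewrite fineK // ge0_fin_numE ?integral_ge0.
apply: (@le_lt_trans _ _ (Num.max C (I / (eps / 2) ^+ 2))%:E); last exact: ltry.
apply: ge_ereal_sup => _ [B [[c [r [r0 ->]]] Bx] <-].
have [m [mu_m mr]] := mu_eball_fin_ge c r r0.
have m0 : 0 < m by apply: lt_le_trans mr; rewrite exprn_gt0.
suff int_le : (\int[mu R]_(y in eball c r) (`|f y|)%:E <=
               (Num.max C (I / (eps / 2) ^+ 2) * m)%:E)%E.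
  rewrite mu_m /=; apply: le_trans (lee_wpmul2r _ int_le) _.
    by rewrite lee_fin invr_ge0 ltW.
  by rewrite -EFinM mulfK ?gt_eqF.
have [r_small|r_large] := ltP r (eps / 2).
- apply: (@le_trans _ _ (C * m)%:E); last by rewrite lee_fin ler_pM2r // le_max lexx.
  rewrite EFinM -mu_m -integral_cst; last exact: measurable_eball.
  apply: ge0_le_integral => //; first exact: measurable_eball.
  + exact: measurable_funTS mfa.
  + move=> y By; rewrite lee_fin; apply: fC.
    by apply: eball_sub_square_mem r0 _ Bx _ By; lra.
- apply: (@le_trans _ _ (I / (eps / 2) ^+ 2 * m)%:E).
    apply: (@le_trans _ _ I%:E).
      rewrite -intI; apply: ge0_subset_integral => //; exact: measurable_eball.
    rewrite lee_fin mulrAC ler_pdivlMr ?exprn_gt0 ?divr_gt0 // ler_wpM2l //.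
    by apply: le_trans mr; rewrite !expr2; nra.
  by rewrite lee_fin ler_pM2r // le_max lexx orbT.
Qed.

Definition sq01 : set P := `[0, 1] `*` `]0, 1].

Definition inv_sqrt_snd (y : P) : R := \1_sq01 y * y.2 `^ (- 2^-1).

Lemma measurable_sq01 : measurable sq01.
Proof. by apply: measurableX; exact: measurable_itv. Qed.

Lemma sq01P y : sq01 y <-> 0 <= y.1 <= 1 /\ 0 < y.2 <= 1.
Proof. by rewrite /sq01 /= !in_itv. Qed.

Lemma measurable_inv_sqrt_snd : measurable_fun setT inv_sqrt_snd.
Proof.
apply: measurable_funM; first exact: measurable_indic measurable_sq01.
exact: measurableT_comp (measurable_powR _) measurable_snd.
Qed.

Lemma inv_sqrt_snd_out y : ~ sq01 y -> inv_sqrt_snd y = 0.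
Proof. by move=> y_out; rewrite /inv_sqrt_snd indicE memNset // mul0r. Qed.

Lemma inv_sqrt_sndE y : sq01 y -> inv_sqrt_snd y = (Num.sqrt y.2)^-1.
Proof.
move=> y_in; rewrite /inv_sqrt_snd indicE mem_set // mul1r.
have /sq01P[_ /andP[y0 _]] := y_in.
by rewrite powRN powR12_sqrt // ltW.
Qed.

Lemma inv_sqrt_snd_ge0 y : 0 <= inv_sqrt_snd y.
Proof.
have [y_in|/inv_sqrt_snd_out->//] := pselect (sq01 y).
by rewrite inv_sqrt_sndE // invr_ge0 sqrtr_ge0.
Qed.

Lemma inv_sqrt_snd_le y s : 0 < s -> s <= y.2 -> inv_sqrt_snd y <= (Num.sqrt s)^-1.
Proof.
move=> s0 sy; have [y_in|/inv_sqrt_snd_out->] := pselect (sq01 y); last first.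
  by rewrite invr_ge0 sqrtr_ge0.
by rewrite inv_sqrt_sndE // lef_pV2 ?posrE ?sqrtr_gt0 ?ler_sqrt //; lra.
Qed.

Lemma inv_sqrt_snd_ge y s : sq01 y -> y.2 <= s -> (Num.sqrt s)^-1 <= inv_sqrt_snd y.
Proof.
move=> y_in ys; have /sq01P[_ /andP[y0 _]] := y_in.
by rewrite inv_sqrt_sndE // lef_pV2 ?posrE ?sqrtr_gt0 ?ler_sqrt //; lra.
Qed.

Definition dyad (k : nat) : R := (2^-1 ^+ k) ^+ 2.

Definition layer (k : nat) : set P := `[0, 1] `*` `]dyad k.+1, dyad k].

Lemma dyad_gt0 k : 0 < dyad k.
Proof. by rewrite exprn_gt0 // exprn_gt0 // invr_gt0. Qed.

Lemma inv_sqrt_dyad k : (Num.sqrt (dyad k))^-1 = 2 ^+ k.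
Proof. by rewrite sqrtr_sqr gtr0_norm ?exprn_gt0 ?invr_gt0 // exprVn invrK. Qed.

Lemma dyadS k : dyad k.+1 = dyad k / 4.
Proof. by rewrite /dyad (exprS _ k); field. Qed.

Lemma exists_dyad_lt s : 0 < s -> exists N, dyad N < s.
Proof.
move=> s0; exists (Num.truncn s^-1); set N := Num.truncn s^-1.
have dyad_le : dyad N <= (2 ^+ N)^-1.
  rewrite -exprVn /dyad expr2 ger_pMr ?exprn_gt0 ?invr_gt0 //.
  by apply: exprn_ile1; rewrite ?invr_ge0 // invf_le1 //; lra.
apply: le_lt_trans dyad_le _.
rewrite -[s]invrK ltf_pV2 ?posrE ?invr_gt0 ?exprn_gt0 //.
apply: lt_le_trans (truncnS_gt _) _.
by rewrite -natrX ler_nat ltn_expl.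
Qed.

Lemma layer_cover s : 0 < s <= 1 -> exists k, dyad k.+1 < s <= dyad k.
Proof.
move=> /andP[s0 s1]; have [N] := exists_dyad_lt _ s0.
elim: N => [|N IH] sN; first by rewrite /dyad expr0 expr1n in sN; lra.
have [/IH//|Ns] := ltP (dyad N) s.
by exists N; rewrite sN Ns.
Qed.

Lemma measurable_layer k : measurable (layer k).
Proof. by apply: measurableX; exact: measurable_itv. Qed.

Lemma inv_sqrt_snd_le_layer k y : layer k y -> inv_sqrt_snd y <= 2 ^+ k.+1.
Proof.
rewrite /layer /= in_itv /= => -[_ /andP[ky _]].
by rewrite -inv_sqrt_dyad inv_sqrt_snd_le ?dyad_gt0 ?ltW.
Qed.

Lemma mu_layer k : mu R (layer k) = (dyad k - dyad k.+1)%:E.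
Proof.
rewrite muE lambda1E.
have -> : @emb R @^-1` layer k `&` `[0, 1] = set0.
  apply/seteqP; split => // t [[_ /=]]; rewrite in_itv /= => /andP[kt _].
  by have := dyad_gt0 k.+1; lra.
rewrite measure0 add0e lambda2_setX; try exact: measurable_itv.
rewrite !lebesgue_measure_itv_len ?ltr01 //; first by rewrite subr0 mul1e.
by rewrite dyadS; have := dyad_gt0 k; lra.
Qed.

Lemma layer_mass k : 2 ^+ k.+1 * (dyad k - dyad k.+1) = 3 / (2 ^ k.+1)%:R.
Proof.
have two_k : (2 : R) ^+ k != 0 by rewrite expf_neq0.
by rewrite dyadS /dyad natrX exprVn !exprS; field; rewrite two_k.
Qed.

Definition layer_sum (y : P) : \bar R :=
  (\sum_(k <oo) ((2 : R) ^+ k.+1 * \1_(layer k) y)%:E)%E.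

Lemma layer_term_ge0 k y : (0 <= ((2 : R) ^+ k.+1 * \1_(layer k) y)%:E)%E.
Proof. by rewrite lee_fin mulr_ge0 ?exprn_ge0. Qed.

Lemma measurable_layer_term k :
  measurable_fun setT (fun y => ((2 : R) ^+ k.+1 * \1_(layer k) y)%:E).
Proof.
apply/measurable_EFinP/measurable_funM; first exact: measurable_cst.
exact: measurable_indic (measurable_layer k).
Qed.

Lemma integral_layer_sum_le : (\int[mu R]_y layer_sum y <= 3%:E)%E.
Proof.
rewrite /layer_sum integral_nneseries //; last exact: measurable_layer_term.
rewrite [leLHS](_ : _ = \sum_(k <oo) (3 / (2 ^ k.+1)%:R)%:E)%E; last first.
  apply: eq_eseriesr => k _.
  rewrite (@integralZl_indic _ _ _ (mu R) setT measurableT (fun=> layer k)) //.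
  - rewrite integral_indic ?setIT ?mu_layer -?EFinM ?layer_mass //.
    exact: measurable_layer.
  - by rewrite ltNge exprn_ge0.
  - exact: measurable_layer.
exact: (@epsilon_trick0 R 3 xpredT).
Qed.

Lemma inv_sqrt_snd_le_layer_sum y : ((inv_sqrt_snd y)%:E <= layer_sum y)%E.
Proof.
have layer_sum_ge0 : (0 <= layer_sum y)%E.
  by apply: nneseries_ge0 => k _ _; exact: layer_term_ge0.
have [y_in|/inv_sqrt_snd_out->//] := pselect (sq01 y).
have /sq01P[y1 y2] := y_in.
have [k y2k] := layer_cover _ y2.
have yk : layer k y by split; rewrite /= in_itv.
apply: (@le_trans _ _ ((2 : R) ^+ k.+1 * \1_(layer k) y)%:E).
  by rewrite indicE mem_set // mulr1 lee_fin inv_sqrt_snd_le_layer.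
rewrite /layer_sum (nneseriesD1 (n := k)) // leeDl //.
by apply: nneseries_ge0 => n _ _; exact: layer_term_ge0.
Qed.

Lemma integrable_inv_sqrt_snd : (mu R).-integrable setT (EFin \o inv_sqrt_snd).
Proof.
apply/integrableP; split; first by apply/measurable_EFinP; exact: measurable_inv_sqrt_snd.
apply: (@le_lt_trans _ _ (\int[mu R]_y layer_sum y)%E); last first.
  by apply: le_lt_trans integral_layer_sum_le _; exact: ltry.
apply: ge0_le_integral => //.
- by apply: measurable_EFin_normr; exact: measurable_inv_sqrt_snd.
- by apply: ge0_emeasurable_sum => // k _; exact: measurable_layer_term.
- by move=> y _ /=; rewrite (ger0_norm (inv_sqrt_snd_ge0 y)) inv_sqrt_snd_le_layer_sum.
Qed.

Lemma inv_sqrt_snd_locally_bounded (x : P) : ~ segA R x ->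
  exists eps C : R, 0 < eps /\ forall y, square x eps y -> `|inv_sqrt_snd y| <= C.
Proof.
move=> xA.
have vanish eps : 0 < eps -> (forall y, square x eps y -> ~ sq01 y) ->
    exists eps C : R, 0 < eps /\ forall y, square x eps y -> `|inv_sqrt_snd y| <= C.
  move=> eps0 disj; exists eps, 0; split => // y /disj/inv_sqrt_snd_out->.
  by rewrite normr0.
have [x2_neg|x2_pos|x2_0] := ltgtP (x.2 : R) 0.
- apply: (vanish (- x.2)); first lra.
  move=> y; rewrite /square /box /= !in_itv /= => -[_ /andP[_ ?]] /sq01P[_ /andP[? _]].
  lra.
- exists (x.2 / 2), (Num.sqrt (x.2 / 2))^-1; split; first lra.
  move=> y; rewrite /square /box /= !in_itv /= => -[_ /andP[? _]].
  by rewrite ger0_norm ?inv_sqrt_snd_ge0 // inv_sqrt_snd_le //; lra.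
- have [x1_neg|x1_big] : x.1 < 0 \/ 1 < x.1.
    have : ~~ ((0 <= x.1) && (x.1 <= 1)) by apply/negP => ?; exact: xA.
    by rewrite negb_and -!ltNge => /orP.
  + apply: (vanish (- x.1)); first lra.
    move=> y; rewrite /square /box /= !in_itv /= => -[/andP[_ ?] _] /sq01P[/andP[? _] _].
    lra.
  + apply: (vanish (x.1 - 1)); first lra.
    move=> y; rewrite /square /box /= !in_itv /= => -[/andP[? _] _] /sq01P[/andP[_ ?] _].
    lra.
Qed.

Lemma maxfun_inv_sqrt_snd_lty (x : P) : ~ segA R x ->
  (maxfun (mu R) inv_sqrt_snd x < +oo)%E.
Proof.
move=> /inv_sqrt_snd_locally_bounded[eps [C [eps0 bounded]]].
exact: maxfun_lty_locally_bounded eps0 integrable_inv_sqrt_snd bounded.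
Qed.

(* The radius exceeds the distance r to (t, 0) only by r^3, so the ball meets
   the x-axis in a chord of length O(r^2). *)
Definition tangent_ball (t r : R) : set P := eball ((t, r) : P) (r + r ^+ 3).

Lemma tangent_ball_mem t r : 0 < r -> tangent_ball t r ((t, 0) : P).
Proof.
move=> r0; rewrite /tangent_ball /eball /= subrr sub0r sqrrN expr0n /= add0r.
by have := exprn_gt0 3 r0; rewrite !expr2 => ?; nra.
Qed.

Lemma lambda1_tangent_ball_le t r : 0 < r <= 1 ->
  (lambda1 R (tangent_ball t r) <= (4 * r ^+ 2)%:E)%E.
Proof.
move=> /andP[r0 r1]; have r2_gt0 : 0 < 2 * r ^+ 2 by rewrite mulr_gt0 ?exprn_gt0.
rewrite lambda1E; apply: (@le_trans _ _ (leb `]t - 2 * r ^+ 2, t + 2 * r ^+ 2[)).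
  apply: le_measure; rewrite ?inE; last first.
  - move=> s [/=]; rewrite /tangent_ball /eball /= sub0r sqrrN => s_in _.
    have /(ltr_sqr_bounds _ _ r2_gt0)/andP[? ?] : (s - t) ^+ 2 < (2 * r ^+ 2) ^+ 2.
      have r42 : r ^+ 4 * r ^+ 2 <= r ^+ 4 * 1.
        by rewrite ler_wpM2l ?exprn_ge0 ?exprn_ile1 ?(ltW r0).
      have -> : (2 * r ^+ 2) ^+ 2 = 4 * r ^+ 4 by ring.
      have : (r + r ^+ 3) ^+ 2 = r ^+ 2 + 2 * r ^+ 4 + r ^+ 4 * r ^+ 2 by ring.
      have := exprn_gt0 4 r0; lra.
    by rewrite in_itv /=; apply/andP; split; lra.
  - exact: measurable_itv.
  - exact: measurable_emb_preimage (measurable_eball _ _).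
by rewrite lebesgue_measure_itv_len ?lee_fin; lra.
Qed.

Lemma lambda2_tangent_ball_le t r : 0 < r <= 1 ->
  (lambda2 R (tangent_ball t r) <= (16 * r ^+ 2)%:E)%E.
Proof.
move=> /andP[r0 r1]; have rho0 : 0 < r + r ^+ 3 by rewrite addr_gt0 ?exprn_gt0.
apply: (@le_trans _ _ (lambda2 R (square (t, r) (r + r ^+ 3)))).
  apply: le_measure; rewrite ?inE; [exact: measurable_eball|exact: measurable_box|].
  exact: eball_sub_square.
rewrite lambda2_box ?lee_fin /=; try lra.
have r3 : r ^+ 3 <= r by rewrite -[leRHS]expr1 ler_wiXn2l // ltW.
by rewrite !expr2; nra.
Qed.

Lemma mu_tangent_ball_le t r : 0 < r <= 1 ->
  (mu R (tangent_ball t r) <= (20 * r ^+ 2)%:E)%E.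
Proof.
move=> r01; rewrite muE (_ : 20 * r ^+ 2 = 4 * r ^+ 2 + 16 * r ^+ 2); last by ring.
by rewrite EFinD leeD ?lambda1_tangent_ball_le ?lambda2_tangent_ball_le.
Qed.

Lemma box_sub_tangent_ball t r : 0 <= t <= 1 -> 0 < r <= 1 ->
  exists2 a, 0 <= a /\ a + r / 2 <= 1 &
    box a (a + r / 2) (r / 2) (3 * r / 2) `<=` tangent_ball t r.
Proof.
move=> /andP[t0 t1] /andP[r0 r1].
have [a [a0 a1 a_t t_a]] : exists a, [/\ 0 <= a, a + r / 2 <= 1, a <= t & t <= a + r / 2].
  by have [?|?] := leP t 2^-1; [exists t|exists (t - r / 2)]; split; lra.
exists a => //; move=> y; rewrite /box /tangent_ball /eball /= !in_itv /=.
move=> -[/andP[? ?] /andP[? ?]]; have := exprn_gt0 3 r0; nra.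
Qed.

Lemma integral_tangent_ball_ge t r : 0 <= t <= 1 -> 0 < r <= 2^-1 ->
  ((r ^+ 2 / 2 * (Num.sqrt (2 * r))^-1)%:E <=
   \int[mu R]_(y in tangent_ball t r) (`|inv_sqrt_snd y|)%:E)%E.
Proof.
move=> t01 /andP[r0 r_half].
have r01 : 0 < r <= 1 by rewrite r0; lra.
have [a [a0 a1] sub] := box_sub_tangent_ball _ _ t01 r01.
set S := box a (a + r / 2) (r / 2) (3 * r / 2).
have mfa : measurable_fun setT (fun y => (`|inv_sqrt_snd y|)%:E).
  by apply: measurable_EFin_normr; exact: measurable_inv_sqrt_snd.
apply: (@le_trans _ _ (\int[mu R]_(y in S) (`|inv_sqrt_snd y|)%:E)%E); last first.
  apply: ge0_subset_integral => //; [exact: measurable_box|exact: measurable_eball|].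
  exact: measurable_funTS mfa.
apply: (@le_trans _ _ (\int[mu R]_(y in S) ((Num.sqrt (2 * r))^-1)%:E)%E); last first.
  apply: ge0_le_integral => //; [exact: measurable_box|exact: measurable_funTS mfa|].
  move=> y; rewrite /S /box /= !in_itv /= => -[/andP[? ?] /andP[? ?]].
  rewrite lee_fin ger0_norm ?inv_sqrt_snd_ge0 // inv_sqrt_snd_ge //; last lra.
  by apply/sq01P; split; apply/andP; split; lra.
rewrite integral_cst; last exact: measurable_box.
rewrite mulrC EFinM lee_wpmul2l ?lee_fin ?invr_ge0 ?sqrtr_ge0 //.
apply: le_trans (lambda2_le_mu _); rewrite lambda2_box ?lee_fin; lra.
Qed.

Lemma maxfun_inv_sqrt_snd_segA (x : P) : segA R x ->
  maxfun (mu R) inv_sqrt_snd x = +oo%E.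
Proof.
case: x => t _ [/= t01 ->]; apply: ereal_sup_unbounded => M.
(* f >= (2r)^(-1/2) = K on a box of area r^2/2 in a ball of measure <= 20 r^2,
   so the average is at least K/40 > M. *)
pose K : R := 40 * (`|M| + 1); pose r : R := (K ^+ 2)^-1 / 2.
have K_ge : 40 <= K by rewrite /K; have := normr_ge0 M; lra.
have K0 : 0 < K by lra.
have r0 : 0 < r by rewrite /r divr_gt0 // invr_gt0 exprn_gt0.
have r_half : r <= 2^-1.
  have : (K ^+ 2)^-1 <= 1 by rewrite invf_le1 ?exprn_gt0 // expr2; nra.
  by rewrite /r; lra.
have inv_sqrt_2r : (Num.sqrt (2 * r))^-1 = K.
  have -> : 2 * r = K^-1 ^+ 2 by rewrite /r exprVn mulrC divfK.
  by rewrite sqrtr_sqr gtr0_norm ?invrK // invr_gt0; lra.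
have rho0 : 0 < r + r ^+ 3 by rewrite addr_gt0 ?exprn_gt0.
have [m [mu_m mr]] := mu_eball_fin_ge (t, r) (r + r ^+ 3) rho0.
have m0 : 0 < m by apply: lt_le_trans mr; rewrite exprn_gt0.
have m_le : m <= 20 * r ^+ 2.
  by rewrite -lee_fin -mu_m mu_tangent_ball_le // r0; lra.
eexists; first by exists (tangent_ball t r) => //; split;
  [exists (t, r), (r + r ^+ 3)|exact: tangent_ball_mem].
have r_small : 0 < r <= 2^-1 by rewrite r0.
have inv_m_ge0 : (0 <= (m^-1)%:E)%E by rewrite lee_fin invr_ge0 ltW.
rewrite mu_m /=.
apply: lt_le_trans _ (lee_wpmul2r inv_m_ge0 (integral_tangent_ball_ge _ _ t01 r_small)).
rewrite inv_sqrt_2r -EFinM lte_fin ltr_pdivlMr //.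
have Mm : M * m <= `|M| * (20 * r ^+ 2).
  apply: le_trans (_ : `|M| * m <= _); last by rewrite ler_wpM2l.
  by rewrite ler_pM2r // real_ler_norm ?num_real.
by apply: le_lt_trans Mm _; rewrite /K; have := exprn_gt0 2 r0; nra.
Qed.

Lemma maxfun_inv_sqrt_snd_pinftyE :
  [set x | maxfun (mu R) inv_sqrt_snd x = +oo%E] = segA R.
Proof.
apply/seteqP; split => x /=; last exact: maxfun_inv_sqrt_snd_segA.
move=> Mx_oo; apply: contrapT => /maxfun_inv_sqrt_snd_lty.
by rewrite Mx_oo ltxx.
Qed.

Lemma mu_segA_ge1 : (1 <= mu R (segA R))%E.
Proof.
have emb_segA : @emb R @^-1` segA R `&` `[0, 1] = [set` `[0, 1]].
  apply/seteqP; split => s; first by case.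
  by move=> s01; split => //; split => //; move: s01; rewrite /= in_itv.
rewrite muE lambda1E emb_segA lebesgue_measure_itv_len // subr0.
by rewrite leeDl // measure_ge0.
Qed.

End counterexample.

Theorem mainTheorem20 (R : realType) :
  (exists f : R2 R -> R,
      measurable_fun [set: R2 R] f /\
      (mu R).-integrable [set: R2 R] (EFin \o f) /\
      (exists K : set (R^o * R^o)%type, compact K /\
         (forall x : R2 R, f x != 0 -> K x)) /\
      [set x | maxfun (mu R) f x = +oo%E] = segA R)
  /\ ~ dichotomy (mu R).
Proof.
split.
  exists (inv_sqrt_snd R); split; first exact: measurable_inv_sqrt_snd.
  split; first exact: integrable_inv_sqrt_snd.
  split; last exact: maxfun_inv_sqrt_snd_pinftyE.
  exists (`[0, 1] `*` `[0, 1]); split; first by apply: compact_setX; exact: segment_compact.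
  move=> y; have [/sq01P[y1 /andP[y20 y21]] _|/inv_sqrt_snd_out->] := pselect (sq01 R y).
    by split; rewrite /= in_itv //= ltW.
  by rewrite eqxx.
move=> dichotomy_mu.
have integrable_on_balls B : is_eball B -> (mu R).-integrable B (EFin \o inv_sqrt_snd R).
  move=> [c [r [_ ->]]]; apply: integrableS (integrable_inv_sqrt_snd R) => //.
  exact: measurable_eball.
have [|/(_ (2, 2))] := dichotomy_mu _ (measurable_inv_sqrt_snd R) integrable_on_balls.
  rewrite maxfun_inv_sqrt_snd_pinftyE => mu_segA0.
  by have := mu_segA_ge1 R; rewrite mu_segA0 lee_fin ler10.
have /maxfun_inv_sqrt_snd_lty : ~ segA R (2, 2) by case=> /= /andP[_]; lra.
by move=> + Mx_oo; rewrite Mx_oo ltxx.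
Qed.
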